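(* Let each $f_i:\mathbb{R}^d\to\mathbb{R}$, $i\in[n]$, be differentiable with $L$-Lipschitz gradient. Consider the iteration $X^{(s+1)} = (X^{(s)} - \eta_s\,\partial f(X^{(s)}))W^{(s)}$ for $s = t,\dots,t+H-1$, where $W^{(t)}$ is a minimizer of $\min_{W\in\mathcal{M}_w}\|\partial f(\overline{X}^{(t)})W - \overline{\partial f}(\overline{X}^{(t)})\|_F^2$ and $W^{(t+i)} = W^{(t)}$ for $0\le i\le H-1$. Then $$\big\|\partial f(\overline{X}^{(t+H)})W^{(t)} - \overline{\partial f}(\overline{X}^{(t+H)})\big\|_F^2 \leq 2\big\|\partial f(\overline{X}^{(t)})W^{(t)} - \overline{\partial f}(\overline{X}^{(t)})\big\|_F^2 + 2H\sum_{i=0}^{H-1}\eta_{t+i}^2L^2\|\partial f(X^{(t+i)})\|_F^2.$$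
   Context: $X^{(s)} = [\mathbf{x}_1^{(s)},\dots,\mathbf{x}_n^{(s)}]\in\mathbb{R}^{d\times n}$; $\partial f(X) = [\nabla f_1(\mathbf{x}_1),\dots,\nabla f_n(\mathbf{x}_n)]$; for $Y\in\mathbb{R}^{d\times n}$, $\overline{Y} = Y\frac{\mathbf{1}\mathbf{1}^\top}{n}$ and $\overline{\partial f}(X) = \partial f(X)\frac{\mathbf{1}\mathbf{1}^\top}{n}$. Given a graph $G=(V,E)$ on $n$ nodes, $\mathcal{M}_w = \{W\in\mathbb{R}^{n\times n}: W\mathbf{1} = \mathbf{1},\ \mathbf{1}^\top W = \mathbf{1}^\top,\ 0\le w_{ij}\le 1\ \forall i,j,\ w_{ij}=0\ \forall (i,j)\notin E\}$. *)

From HB Require Import structures.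
From mathcomp Require Import all_boot all_order all_algebra.
From mathcomp Require Import all_classical all_reals all_analysis.
Set Implicit Arguments. Unset Strict Implicit. Unset Printing Implicit Defensive.
Import Order.TTheory GRing.Theory Num.Theory.
Import numFieldNormedType.Exports.
Local Open Scope ring_scope.

Section Defs.
Variable R : realType.

Definition norm2 (d : nat) (v : 'cV[R]_d) : R := Num.sqrt (\sum_(k < d) v k 0 ^+ 2).

Definition fnorm (d n : nat) (A : 'M[R]_(d, n)) : R :=
  Num.sqrt (\sum_(k < d) \sum_(i < n) A k i ^+ 2).

Definition mbar (d n : nat) (Y : 'M[R]_(d, n)) : 'M[R]_(d, n) :=
  Y *m (n%:R^-1 *: (const_mx 1 : 'M[R]_(n, n))).

Definition pf (d n : nat) (grad : 'I_n -> 'cV[R]_d -> 'cV[R]_d) (X : 'M[R]_(d, n))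
  : 'M[R]_(d, n) := \matrix_(k < d, i < n) grad i (col i X) k 0.

Definition pfbar (d n : nat) (grad : 'I_n -> 'cV[R]_d -> 'cV[R]_d) (X : 'M[R]_(d, n))
  : 'M[R]_(d, n) := mbar (pf grad X).

Definition Mw (n : nat) (E : rel 'I_n) (W : 'M[R]_n) : Prop :=
  [/\ W *m (const_mx 1 : 'cV[R]_n) = const_mx 1,
      (const_mx 1 : 'rV[R]_n) *m W = const_mx 1,
      (forall i j, 0 <= W i j <= 1) &
      (forall i j, ~~ E i j -> W i j = 0)].

Definition is_gradient (d : nat) (f : 'cV[R]_d -> R^o) (grad : 'cV[R]_d -> 'cV[R]_d) : Prop :=
  forall x, differentiable f x /\
    forall h : 'cV[R]_d, 'd f x h = \sum_(k < d) grad x k 0 * h k 0.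

Definition lipschitz_grad (d : nat) (L : R) (g : 'cV[R]_d -> 'cV[R]_d) : Prop :=
  forall x y, norm2 (g x - g y) <= L * norm2 (x - y).

End Defs.

From HB Require Import structures.
From mathcomp Require Import all_boot all_order all_algebra.
From mathcomp Require Import all_classical all_reals all_analysis.
From mathcomp Require Import ring lra.
Set Implicit Arguments. Unset Strict Implicit. Unset Printing Implicit Defensive.
Import Order.TTheory GRing.Theory Num.Theory.
Import numFieldNormedType.Exports.
Local Open Scope ring_scope.

(* For doubly stochastic W, Y W - Ybar = (Y - Ybar) W, where Y |-> Y - Ybar is an orthogonal
   projection and right multiplication by W is a contraction (Jensen along the columns of W);
   so the linear map Y |-> Y W - Ybar does not increase the Frobenius norm.  Applying it to
   dF(Xbar_{t+H}) = dF(Xbar_t) + D and using (a + b)^2 <= 2 a^2 + 2 b^2 leaves |D|^2, which is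
   at most L^2 |Xbar_{t+H} - Xbar_t|^2.  Since W preserves row averages, the mean iterate moves
   by - sum_i eta_{t+i} dFbar(X_{t+i}); Cauchy-Schwarz and |dFbar| <= |dF| then give the bound
   H sum_i eta_{t+i}^2 |dF(X_{t+i})|^2. *)

Section Scalar.
Variable R : realType.

Lemma jensen_sqr (I : finType) (w a : I -> R) : (forall i, 0 <= w i) ->
  \sum_i w i = 1 -> (\sum_i w i * a i) ^+ 2 <= \sum_i w i * a i ^+ 2.
Proof.
move=> w_ge0 w_sum1; set m := \sum_i w i * a i.
have var_ge0 : 0 <= \sum_i w i * (a i - m) ^+ 2.
  by apply: sumr_ge0 => i _; rewrite mulr_ge0 ?sqr_ge0.
rewrite (eq_bigr (fun i => w i * a i ^+ 2 - (m *+ 2) * (w i * a i) + m ^+ 2 * w i))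
  in var_ge0; last by move=> i _; ring.
rewrite big_split /= sumrB -!mulr_sumr w_sum1 -/m in var_ge0.
nra.
Qed.

Lemma sum_sqr_sub_mean (m : nat) (a : 'I_m -> R) (c : R) :
  c = m%:R^-1 * \sum_i a i ->
  \sum_i (a i - c) ^+ 2 + m%:R * c ^+ 2 = \sum_i a i ^+ 2.
Proof.
case: m a => [|m] a c_mean.
  by rewrite !big_ord0 mul0r addr0.
have sum_a : \sum_i a i = m.+1%:R * c.
  by rewrite c_mean mulrA mulfV ?mul1r ?pnatr_eq0.
under eq_bigr do rewrite sqrrB.
rewrite !big_split /= sumrN sumr_const card_ord sumrMnl -mulr_suml sum_a.
ring.
Qed.

Lemma sqr_sum_le (m : nat) (a : 'I_m -> R) :
  (\sum_i a i) ^+ 2 <= m%:R * \sum_i a i ^+ 2.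
Proof.
case: m a => [|m] a; first by rewrite !big_ord0 mul0r expr0n.
set c := m.+1%:R^-1 * \sum_i a i.
have sum_a : \sum_i a i = m.+1%:R * c by rewrite /c mulrA mulfV ?mul1r ?pnatr_eq0.
rewrite -(@sum_sqr_sub_mean _ a c erefl) sum_a.
have -> : (m.+1%:R * c) ^+ 2 = m.+1%:R * (m.+1%:R * c ^+ 2) by ring.
rewrite ler_wpM2l ?ler0n // lerDr.
by apply: sumr_ge0 => i _; exact: sqr_ge0.
Qed.

End Scalar.

Section Frobenius.
Variable R : realType.
Implicit Types d n : nat.

Lemma norm2_sqr d (v : 'cV[R]_d) : norm2 v ^+ 2 = \sum_k v k 0 ^+ 2.
Proof. by rewrite /norm2 sqr_sqrtr // sumr_ge0 // => k _; exact: sqr_ge0. Qed.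

Lemma fnorm_sqr d n (A : 'M[R]_(d, n)) : fnorm A ^+ 2 = \sum_k \sum_i A k i ^+ 2.
Proof.
rewrite /fnorm sqr_sqrtr //.
by apply: sumr_ge0 => k _; apply: sumr_ge0 => i _; exact: sqr_ge0.
Qed.

Lemma fnorm_sqr_col d n (A : 'M[R]_(d, n)) :
  fnorm A ^+ 2 = \sum_i norm2 (col i A) ^+ 2.
Proof.
rewrite fnorm_sqr exchange_big; apply: eq_bigr => i _.
by rewrite norm2_sqr; apply: eq_bigr => k _; rewrite mxE.
Qed.

Lemma fnorm_sqrZ d n (a : R) (A : 'M[R]_(d, n)) :
  fnorm (a *: A) ^+ 2 = a ^+ 2 * fnorm A ^+ 2.
Proof.
rewrite !fnorm_sqr mulr_sumr; apply: eq_bigr => k _.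
by rewrite mulr_sumr; apply: eq_bigr => i _; rewrite mxE exprMn.
Qed.

Lemma fnorm_sqrN d n (A : 'M[R]_(d, n)) : fnorm (- A) ^+ 2 = fnorm A ^+ 2.
Proof. by rewrite -scaleN1r fnorm_sqrZ sqrrN expr1n mul1r. Qed.

Lemma fnorm_sqrD_le d n (A B : 'M[R]_(d, n)) :
  fnorm (A + B) ^+ 2 <= 2 * fnorm A ^+ 2 + 2 * fnorm B ^+ 2.
Proof.
rewrite !fnorm_sqr !mulr_sumr -big_split /=; apply: ler_sum => k _.
rewrite !mulr_sumr -big_split /=; apply: ler_sum => i _.
rewrite mxE; have := sqr_ge0 (A k i - B k i); nra.
Qed.

Lemma fnorm_sqr_sum_le d n m (A : 'I_m -> 'M[R]_(d, n)) :
  fnorm (\sum_i A i) ^+ 2 <= m%:R * \sum_i fnorm (A i) ^+ 2.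
Proof.
under [X in _ <= _ * X]eq_bigr do rewrite fnorm_sqr.
rewrite fnorm_sqr [X in _ <= _ * X]exchange_big mulr_sumr; apply: ler_sum => k _.
rewrite [X in _ <= _ * X]exchange_big mulr_sumr; apply: ler_sum => j _.
rewrite summxE; exact: sqr_sum_le.
Qed.

Lemma mbarE d n (Y : 'M[R]_(d, n)) k j : mbar Y k j = n%:R^-1 * \sum_l Y k l.
Proof.
rewrite /mbar mxE mulr_sumr; apply: eq_bigr => l _.
by rewrite !mxE mulr1 mulrC.
Qed.

Lemma fnorm_sqr_mbar_split d n (Y : 'M[R]_(d, n)) :
  fnorm (Y - mbar Y) ^+ 2 + fnorm (mbar Y) ^+ 2 = fnorm Y ^+ 2.
Proof.
rewrite !fnorm_sqr -big_split /=; apply: eq_bigr => k _.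
rewrite -(@sum_sqr_sub_mean _ _ (fun j => Y k j) _ erefl); congr (_ + _).
  by apply: eq_bigr => j _; rewrite mxE [X in _ + X]mxE mbarE.
by under eq_bigr do rewrite mbarE; rewrite sumr_const card_ord mulr_natl.
Qed.

Lemma fnorm_mbar_le d n (Y : 'M[R]_(d, n)) : fnorm (mbar Y) ^+ 2 <= fnorm Y ^+ 2.
Proof. by rewrite -[leRHS]fnorm_sqr_mbar_split lerDr sqr_ge0. Qed.

Lemma fnorm_sub_mbar_le d n (Y : 'M[R]_(d, n)) :
  fnorm (Y - mbar Y) ^+ 2 <= fnorm Y ^+ 2.
Proof. by rewrite -[leRHS]fnorm_sqr_mbar_split lerDl sqr_ge0. Qed.

End Frobenius.

Section DoublyStochastic.
Variables (R : realType) (n : nat) (W : 'M[R]_n).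
Hypothesis W_ge0 : forall i j, 0 <= W i j.
Hypothesis W_row1 : W *m const_mx 1 = const_mx 1 :> 'cV[R]_n.
Hypothesis W_col1 : const_mx 1 *m W = const_mx 1 :> 'rV[R]_n.

Lemma row_sum1 i : \sum_j W i j = 1.
Proof.
have := congr1 (fun v : 'cV[R]_n => v i 0) W_row1; rewrite /= !mxE => <-.
by apply: eq_bigr => j _; rewrite mxE mulr1.
Qed.

Lemma col_sum1 j : \sum_i W i j = 1.
Proof.
have := congr1 (fun v : 'rV[R]_n => v 0 j) W_col1; rewrite /= !mxE => <-.
by apply: eq_bigr => i _; rewrite mxE mul1r.
Qed.

Lemma const1_mul_const1 m p :
  const_mx 1 = (const_mx 1 : 'cV[R]_m) *m (const_mx 1 : 'rV[R]_p).
Proof. by apply/matrixP => i j; rewrite !mxE big_ord1 !mxE mulr1. Qed.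

Lemma mbar_mulmx d (Y : 'M[R]_(d, n)) : mbar (Y *m W) = mbar Y.
Proof.
by rewrite /mbar -mulmxA -scalemxAr const1_mul_const1 mulmxA W_row1.
Qed.

Lemma mulmx_mbar d (Y : 'M[R]_(d, n)) : mbar Y *m W = mbar Y.
Proof.
by rewrite /mbar -mulmxA -scalemxAl const1_mul_const1 -mulmxA W_col1.
Qed.

Lemma mulmx_sub_mbar d (Y : 'M[R]_(d, n)) : Y *m W - mbar Y = (Y - mbar Y) *m W.
Proof. by rewrite mulmxBl mulmx_mbar. Qed.

(* Jensen along each column of [W], then the row sums of [W] collapse the double sum. *)
Lemma fnorm_mulmx_le d (Y : 'M[R]_(d, n)) : fnorm (Y *m W) ^+ 2 <= fnorm Y ^+ 2.
Proof.
rewrite !fnorm_sqr; apply: ler_sum => k _.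
apply: (@le_trans _ _ (\sum_j \sum_i W i j * Y k i ^+ 2)).
  apply: ler_sum => j _; rewrite mxE.
  under eq_bigr do rewrite mulrC.
  exact: jensen_sqr (fun i => W_ge0 i j) (col_sum1 j).
rewrite exchange_big /=.
by under eq_bigr do rewrite -mulr_suml row_sum1 mul1r.
Qed.

Lemma fnorm_mulmx_sub_mbar_le d (Y : 'M[R]_(d, n)) :
  fnorm (Y *m W - mbar Y) ^+ 2 <= fnorm Y ^+ 2.
Proof.
rewrite mulmx_sub_mbar; exact: le_trans (fnorm_mulmx_le _) (fnorm_sub_mbar_le Y).
Qed.

End DoublyStochastic.

Section ConsensusDrift.
Variables (R : realType) (d n : nat) (W : 'M[R]_n).
Hypothesis W_row1 : W *m const_mx 1 = const_mx 1 :> 'cV[R]_n.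
Variables (G : 'M[R]_(d, n) -> 'M[R]_(d, n)) (X : nat -> 'M[R]_(d, n)).
Variables (eta : nat -> R) (t : nat).

Lemma mbar_iterate h :
  (forall s, (t <= s < t + h)%N -> X s.+1 = (X s - eta s *: G (X s)) *m W) ->
  mbar (X (t + h)%N)
  = mbar (X t) - \sum_(i < h) eta (t + i)%N *: mbar (G (X (t + i)%N)).
Proof.
elim: h => [|h IH] step; first by rewrite addn0 big_ord0 subr0.
rewrite big_ord_recr /= opprD addrA -IH; last first.
  by move=> s /andP[ts sh]; apply: step; rewrite ts addnS ltnS ltnW.
rewrite addnS step; last by rewrite leq_addr ltn_add2l ltnSn.
by rewrite mbar_mulmx // /mbar mulmxBl scalemxAl.
Qed.

Lemma fnorm_mbar_drift_le h :
  (forall s, (t <= s < t + h)%N -> X s.+1 = (X s - eta s *: G (X s)) *m W) ->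
  fnorm (mbar (X (t + h)%N) - mbar (X t)) ^+ 2
  <= h%:R * \sum_(i < h) eta (t + i)%N ^+ 2 * fnorm (G (X (t + i)%N)) ^+ 2.
Proof.
move=> step; rewrite mbar_iterate // addrAC subrr add0r fnorm_sqrN.
apply: le_trans (fnorm_sqr_sum_le _) _; rewrite ler_wpM2l ?ler0n //.
apply: ler_sum => i _; rewrite fnorm_sqrZ ler_wpM2l ?sqr_ge0 //.
exact: fnorm_mbar_le.
Qed.

End ConsensusDrift.

Lemma fnorm_pf_sub_le (R : realType) d n (grad : 'I_n -> 'cV[R]_d -> 'cV[R]_d)
    (L : R) (A B : 'M[R]_(d, n)) :
  (forall i, lipschitz_grad L (grad i)) ->
  fnorm (pf grad A - pf grad B) ^+ 2 <= L ^+ 2 * fnorm (A - B) ^+ 2.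
Proof.
move=> lip; rewrite !fnorm_sqr_col mulr_sumr; apply: ler_sum => j _.
have col_sub : col j (A - B) = col j A - col j B.
  by apply/matrixP => k l; rewrite !mxE.
have col_pf_sub : col j (pf grad A - pf grad B) = grad j (col j A) - grad j (col j B).
  by apply/matrixP => k l; rewrite [l]ord1 !mxE.
rewrite col_sub col_pf_sub -exprMn !expr2 ler_pM ?sqrtr_ge0 //; exact: lip.
Qed.

Theorem proposition1 (R : realType) (d n : nat) (E : rel 'I_n)
  (f : 'I_n -> 'cV[R]_d -> R^o) (grad : 'I_n -> 'cV[R]_d -> 'cV[R]_d) (L : R)
  (X : nat -> 'M[R]_(d, n)) (eta : nat -> R) (t H : nat) (Wt : 'M[R]_n) :
  (forall i, is_gradient (f i) (grad i)) ->
  (forall i, lipschitz_grad L (grad i)) ->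
  Mw E Wt ->
  (forall W, Mw E W ->
     fnorm (pf grad (mbar (X t)) *m Wt - pfbar grad (mbar (X t))) ^+ 2
     <= fnorm (pf grad (mbar (X t)) *m W - pfbar grad (mbar (X t))) ^+ 2) ->
  (forall s, (t <= s < t + H)%N ->
     X s.+1 = (X s - eta s *: pf grad (X s)) *m Wt) ->
  fnorm (pf grad (mbar (X (t + H)%N)) *m Wt - pfbar grad (mbar (X (t + H)%N))) ^+ 2
  <= 2 * fnorm (pf grad (mbar (X t)) *m Wt - pfbar grad (mbar (X t))) ^+ 2
     + 2 * H%:R * \sum_(i < H) eta (t + i)%N ^+ 2 * L ^+ 2 * fnorm (pf grad (X (t + i)%N)) ^+ 2.
Proof.
move=> _ lipschitz [W_row1 W_col1 W_01 _] _ iterate.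
have W_ge0 i j : 0 <= Wt i j by case/andP: (W_01 i j).
rewrite /pfbar.
set P1 := pf grad (mbar (X (t + H)%N)); set P0 := pf grad (mbar (X t)).
have -> : P1 *m Wt - mbar P1
          = (P0 *m Wt - mbar P0) + ((P1 - P0) *m Wt - mbar (P1 - P0)).
  by rewrite /mbar !mulmxBl addrACA [P0 *m Wt + _]addrC subrK opprB addKr.
apply: le_trans (fnorm_sqrD_le _ _) _; rewrite -mulrA lerD2l ler_wpM2l //.
apply: le_trans (fnorm_mulmx_sub_mbar_le W_ge0 W_row1 W_col1 _) _.
apply: le_trans (fnorm_pf_sub_le _ _ lipschitz) _.
have -> : H%:R * \sum_(i < H) eta (t + i)%N ^+ 2 * L ^+ 2 * fnorm (pf grad (X (t + i)%N)) ^+ 2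
    = L ^+ 2 * (H%:R * \sum_(i < H) eta (t + i)%N ^+ 2 * fnorm (pf grad (X (t + i)%N)) ^+ 2).
  by rewrite mulrCA; congr (_ * _); rewrite mulr_sumr; apply: eq_bigr => i _; ring.
rewrite ler_wpM2l ?sqr_ge0 //.
exact: (fnorm_mbar_drift_le (G := pf grad) W_row1 iterate).
Qed.
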